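(* Let $n\ge2$, let $G$ be an absolutely continuous distribution function on $[0,\infty)$, $\lambda>0$, $\alpha_1,\dots,\alpha_n,\alpha^*_1,\dots,\alpha^*_n>0$. Let $\phi_1,\phi_2$ be Archimedean generators with pseudo-inverses $\psi_1,\psi_2$. Let $\boldsymbol{X}=(X_1,\dots,X_n)$ have joint distribution function $\phi_1\big(\sum_{i=1}^n\psi_1([G(\lambda x_i)]^{\alpha_i})\big)$ and $\boldsymbol{X}^*$ have joint distribution function $\phi_2\big(\sum_{i=1}^n\psi_2([G(\lambda x_i)]^{\alpha^*_i})\big)$. If $\phi_1$ or $\phi_2$ is log-convex, $\psi_2\circ\phi_1$ is super-additive, and $\prod_{i=1}^{j}\alpha^*_{[i]}\le\prod_{i=1}^{j}\alpha_{[i]}$ for all $j=1,\dots,n$, then $X_{n:n}\ge_{\rm st}X^*_{n:n}$.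
   Context: An Archimedean generator is an $n$-monotone function $\phi:[0,\infty)\to[0,1]$ with $\phi(0)=1$, $\lim_{x\to\infty}\phi(x)=0$ ($n$-monotone: $(-1)^k\phi^{(k)}\ge0$ for $k=0,\dots,n-2$ and $(-1)^{n-2}\phi^{(n-2)}$ decreasing and convex); $\psi=\phi^{-1}$ is its pseudo-inverse. $h$ super-additive means $h(x+y)\ge h(x)+h(y)$ for $x,y\ge0$. $\alpha_{[1]}\ge\dots\ge\alpha_{[n]}$ are the components in decreasing order. $X_{n:n}=\max_i X_i$. $X\le_{\rm st}Y$ means $P(X>x)\le P(Y>x)$ for all $x$. *)

From HB Require Import structures.
From mathcomp Require Import all_boot all_order all_algebra.
From mathcomp Require Import all_classical all_reals all_analysis.
Set Implicit Arguments. Unset Strict Implicit. Unset Printing Implicit Defensive.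
Import Order.TTheory GRing.Theory Num.Theory.
Import numFieldNormedType.Exports.
Local Open Scope classical_set_scope.
Local Open Scope ring_scope.

Definition n_monotone {R : realType} (n : nat) (phi : R -> R) : Prop :=
  [/\ (forall k x, (k < n - 2)%N -> 0 < x -> derivable (derive1n k phi) x 1),
      (forall k x, (k <= n - 2)%N -> 0 < x -> 0 <= (-1) ^+ k * derive1n k phi x),
      (forall x y, 0 < x -> x <= y ->
         (-1) ^+ (n - 2) * derive1n (n - 2) phi y
           <= (-1) ^+ (n - 2) * derive1n (n - 2) phi x) &
      (forall x y t, 0 < x -> 0 < y -> 0 <= t <= 1 ->
         (-1) ^+ (n - 2) * derive1n (n - 2) phi (t * x + (1 - t) * y)
           <= t * ((-1) ^+ (n - 2) * derive1n (n - 2) phi x)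
              + (1 - t) * ((-1) ^+ (n - 2) * derive1n (n - 2) phi y))].

(* Archimedean generator (only its values on [0,oo) matter). *)
Definition arch_generator {R : realType} (n : nat) (phi : R -> R) : Prop :=
  [/\ n_monotone n phi,
      (forall x, 0 <= x -> 0 <= phi x <= 1),
      phi 0 = 1,
      {within `[0, +oo[, continuous phi} &
      phi x @[x --> +oo] --> 0].

(* pseudo-inverse psi(u) = inf {x >= 0 | phi x = u}, with inf set0 = +oo *)
Definition gen_pinv {R : realType} (phi : R -> R) (u : R) : \bar R :=
  ereal_inf [set x%:E | x in [set x | 0 <= x /\ phi x = u]].

Definition gen_ext {R : realType} (phi : R -> R) (y : \bar R) : R :=
  match y with
  | r%:E => phi r
  | +oo%E => 0
  | -oo%E => 1
  end.

Definition arch_cdf {R : realType} (n : nat) (phi : R -> R) (u : 'I_n -> R) : R :=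
  gen_ext phi (\sum_(i < n) gen_pinv phi (u i))%E.

Definition log_convex0 {R : realType} (phi : R -> R) : Prop :=
  forall x y t, 0 <= x -> 0 <= y -> 0 <= t <= 1 ->
    phi (t * x + (1 - t) * y) <= phi x `^ t * phi y `^ (1 - t).

Definition super_additive0 {R : realType} (h : R -> \bar R) : Prop :=
  forall x y, 0 <= x -> 0 <= y -> (h x + h y <= h (x + y)%R)%E.

Definition abs_cont_df_nonneg {R : realType} (G : R -> R) : Prop :=
  exists f : R -> R,
    [/\ measurable_fun setT f, (forall x, 0 <= f x),
        (\int[@lebesgue_measure R]_(y in setT) (f y)%:E = 1)%E,
        (forall x, x < 0 -> G x = 0) &
        (forall x, G x = fine (\int[@lebesgue_measure R]_(y in `]-oo, x]) (f y)%:E))].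

Definition sort_dec {R : realType} (n : nat) (a : 'I_n -> R) : seq R :=
  sort (fun x y => y <= x) [seq a i | i <- enum 'I_n].

Definition prod_majorized {R : realType} (n : nat) (b a : 'I_n -> R) : Prop :=
  forall j, (1 <= j <= n)%N ->
    \prod_(x <- take j (sort_dec b)) x <= \prod_(x <- take j (sort_dec a)) x.

Definition vmax {R : realType} (n : nat) (x : 'I_n -> R) : \bar R :=
  \big[maxe/-oo%E]_(i < n) (x i)%:E.

From HB Require Import structures.
From mathcomp Require Import all_boot all_order all_algebra.
From mathcomp Require Import all_classical all_reals all_analysis.
From mathcomp Require Import ring lra measurable_realfun.
Import Order.TTheory GRing.Theory Num.Theory.
Import numFieldNormedType.Exports.
Local Open Scope classical_set_scope.
Local Open Scope ring_scope.
Set Implicit Arguments. Unset Strict Implicit. Unset Printing Implicit Defensive.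

(* Since X_{n:n} <= t iff every X_i <= t, the two survival functions at t are
   1 - C_1(u^alpha_1, ..., u^alpha_n) and 1 - C_2(u^alpha*_1, ..., u^alpha*_n)
   with u = G(lam t), so it suffices to compare the copulas on these points.
   Super-additivity of psi_2 o phi_1 gives C_1 <= C_2 pointwise. For a
   log-convex generator phi and 0 < u <= 1 the map z |-> psi(u^(e^z)) is convex
   and nondecreasing, so by the Tomic-Weyl inequality the weak majorization of
   the ln alpha*_[i] by the ln alpha_[i] gives
   sum_i psi(u^alpha*_i) <= sum_i psi(u^alpha_i), that is, the copula of phi at
   u^alpha is at most its value at u^alpha*. Passing through the log-convex
   generator chains the two comparisons. *)

Section Generator.
Variable R : realType.
Implicit Types (phi : R -> R) (x y v : R).

Definition nonincreasing_generator phi : Prop :=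
  [/\ (forall x y, 0 <= x -> x <= y -> phi y <= phi x),
      (forall x, 0 <= x -> 0 <= phi x <= 1), phi 0 = 1,
      {within `[0, +oo[, continuous phi} & phi x @[x --> +oo] --> 0].

(* For n = 2 monotonicity is part of 2-monotonicity; for n > 2 it follows from
   the sign of the first derivative. *)
Lemma arch_generator_nonincreasing n phi :
  (2 <= n)%N -> arch_generator n phi -> nonincreasing_generator phi.
Proof.
move=> n2 [[hd hs hm _] h01 h0 hcont hlim]; split => // x y.
rewrite le_eqVlt => /predU1P[<- y0 | x0 xy]; first by rewrite h0; case/andP: (h01 y y0).
case: n n2 hd hs hm => [//|[//|[_ _ _ hm|k _ hd hs _]]].
  by have := hm x y x0 xy; rewrite /= !expr0 !mul1r.
apply: (@ler0_derive1_le_cc R phi x y); rewrite ?in_itv /= ?lexx ?andbT ?(ltW xy) //.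
- move=> z; rewrite in_itv /= => /andP[xz _].
  by apply: (hd 0%N) => //; exact: lt_trans xz.
- move=> z; rewrite in_itv /= => /andP[xz _].
  by have := hs 1%N z isT (lt_trans x0 xz); rewrite expr1 mulN1r oppr_ge0.
- apply: continuous_subspaceW hcont => z /=; rewrite !in_itv /= => /andP[xz _].
  by rewrite andbT (le_trans (ltW x0) xz).
Qed.

Lemma gen_pinv_ge0 phi v : (0 <= gen_pinv phi v)%E.
Proof. by apply: le_ereal_inf_tmp => _ [x [x0 _] <-]; rewrite lee_fin. Qed.

Lemma gen_pinv_le_of_eq phi v x : 0 <= x -> phi x = v -> (gen_pinv phi v <= x%:E)%E.
Proof. by move=> x0 hx; apply: ereal_inf_lbound; exists x. Qed.

Variable phi : R -> R.
Hypothesis phi_gen : nonincreasing_generator phi.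

Lemma generator_ivt x v : 0 <= x -> phi x <= v <= 1 ->
  exists2 c, 0 <= c <= x & phi c = v.
Proof.
have [_ h01 h0 hc _] := phi_gen; move=> x0 /andP[xv v1].
have /andP[_ px1] := h01 x x0.
have [||c cI <-] := @IVT R phi 0 x v x0; last by exists c; rewrite in_itv in cI.
- by apply: continuous_subspaceW hc => z /=; rewrite !in_itv /= andbT => /andP[].
- by rewrite h0 (min_idPr px1) (max_idPl px1) xv v1.
Qed.

Lemma gen_pinv_le x v : 0 <= x -> phi x <= v <= 1 -> (gen_pinv phi v <= x%:E)%E.
Proof.
move=> x0 /(generator_ivt x0)[c /andP[c0 cx] hc].
by apply: le_trans (gen_pinv_le_of_eq c0 hc) _; rewrite lee_fin.
Qed.

Lemma generator_onto v : 0 < v <= 1 -> exists2 x, 0 <= x & phi x = v.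
Proof.
have [_ h01 _ _ hlim] := phi_gen; move=> /andP[v0 v1].
have [M [_ HM]] := (cvgrPdist_lt _ _).1 hlim v v0.
set x := Num.max M 0 + 1.
have x0 : 0 <= x by rewrite addr_ge0 // le_max lexx orbT.
have /HM : M < x by rewrite ltr_pwDr // le_max lexx.
rewrite sub0r normrN ger0_norm; last by case/andP: (h01 x x0).
move=> /ltW xv; have [|c /andP[c0 _] <-] := @generator_ivt x v x0.
  by rewrite xv v1.
by exists c.
Qed.

(* The infimum defining the pseudo-inverse is attained: by monotonicity phi
   lies below v just right of the infimum, and right-continuity passes this
   to the infimum itself. *)
Lemma gen_pinv_attained v : (exists2 x, 0 <= x & phi x = v) ->
  exists r, [/\ 0 <= r, gen_pinv phi v = r%:E & phi r = v].
Proof.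
have [hm _ _ hc _] := phi_gen; move=> [x x0 hx].
set S := [set x | 0 <= x /\ phi x = v].
have lbS : has_lbound S by exists 0 => y [].
have neS : S !=set0 by exists x.
have r0 : 0 <= inf S by apply: lb_le_inf neS _ => y [].
exists (inf S); split => //; first by rewrite -ereal_inf_EFin.
have le_v : v <= phi (inf S) by rewrite -hx; apply: hm => //; exact: ge_inf.
apply/eqP; rewrite eq_le le_v andbT; apply/ler_addgt0Pr => e e0.
have right : phi t @[t --> (inf S)^'+] --> phi (inf S).
  have [cf cf0] := (continuous_within_itvcyP 0 phi).1 hc.
  move: r0; rewrite le_eqVlt => /predU1P[<- //|rp].
  by apply: cvg_at_right_filter; apply: cf; rewrite in_itv /= rp.
have [d /= d0 Hd] := (cvgrPdist_lt _ _).1 right e e0.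
have [y Sy ylt] := inf_adherent d0 (conj neS lbS).
have [eyS|yS] := eqVneq y (inf S).
  by move: Sy => [_ <-]; rewrite eyS lerDl ltW.
have ltSy : inf S < y by rewrite lt_neqAle eq_sym yS (ge_inf lbS).
move: Sy => [_ <-]; rewrite -lerBlDl.
apply: le_trans (ler_norm _) (ltW (Hd y _ ltSy)).
by rewrite /= distrC ger0_norm ?subr_ge0 ?ltW // ltrBlDl.
Qed.

Lemma gen_ext_pinv v : 0 <= v <= 1 -> gen_ext phi (gen_pinv phi v) = v.
Proof.
move=> /andP[v0 v1].
have [ex|nex] := pselect (exists2 x, 0 <= x & phi x = v).
  by have [r [_ -> <-]] := gen_pinv_attained ex.
have vz : v = 0.
  apply/eqP; rewrite eq_le v0 andbT leNgt; apply/negP => vp.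
  by apply: nex; apply: generator_onto; rewrite vp v1.
rewrite /gen_pinv; have -> : [set x%:E | x in [set x | 0 <= x /\ phi x = v]] = set0.
  by apply/seteqP; split => // z [y [y0 hy] _]; apply: nex; exists y.
by rewrite ereal_inf0 vz.
Qed.

Lemma gen_ext_01 a : (0 <= a)%E -> 0 <= gen_ext phi a <= 1.
Proof.
have [_ h01 _ _ _] := phi_gen.
by case: a => [r||] //= a0; [apply: h01 | rewrite lexx ler01].
Qed.

Lemma gen_ext_nonincreasing a b : (0 <= a)%E -> (a <= b)%E ->
  gen_ext phi b <= gen_ext phi a.
Proof.
have [hm _ _ _ _] := phi_gen; move=> a0 ab.
case: b ab => [s||] ab; last by case: a a0 ab.
- by case: a a0 ab => [r||] //= a0 ab; apply: hm; rewrite -lee_fin.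
- by case/andP: (gen_ext_01 a0).
Qed.

Lemma gen_pinv_nonincreasing v w : 0 <= v -> v <= w -> w <= 1 ->
  (gen_pinv phi w <= gen_pinv phi v)%E.
Proof.
move=> v0 vw w1; have := gen_pinv_ge0 phi v.
case E: (gen_pinv phi v) => [r||] // r0; last exact: leey.
have := gen_ext_pinv (introT andP (conj v0 (le_trans vw w1))).
by rewrite E /= => hr; apply: gen_pinv_le => //; rewrite hr vw w1.
Qed.

End Generator.

Section TomicWeyl.
Variable R : realType.
Implicit Types (f : R -> R) (a b p q r s : R).

Definition convex_real f := forall a b t, 0 <= t <= 1 ->
  f (t * a + (1 - t) * b) <= t * f a + (1 - t) * f b.

Definition slope f a b := (f a - f b) / (a - b).

Lemma slopeC f a b : slope f a b = slope f b a.
Proof. by rewrite /slope -opprB -[a - b]opprB invrN mulrNN. Qed.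

Lemma slope_ge0 f : {homo f : x y / x <= y} -> forall a b, 0 <= slope f a b.
Proof.
move=> fh a b; have [ba|/ltW ab] := leP b a.
  by apply: divr_ge0; rewrite subr_ge0 // fh.
by rewrite slopeC; apply: divr_ge0; rewrite subr_ge0 // fh.
Qed.

Variable f : R -> R.
Hypothesis f_convex : convex_real f.

Lemma convex_chord p q s : p < q -> q < s ->
  f q * (s - p) <= (s - q) * f p + (q - p) * f s.
Proof.
move=> pq qs; have ps : s - p != 0 by rewrite subr_eq0 gt_eqF // (lt_trans pq qs).
have sp_gt0 : 0 < s - p by rewrite subr_gt0 (lt_trans pq qs).
set t := (s - q) / (s - p).
have t01 : 0 <= t <= 1.
  apply/andP; split; first by apply: divr_ge0; [rewrite subr_ge0 ltW | exact: ltW].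
  by rewrite ler_pdivrMr // mul1r lerD2l lerN2 ltW.
have := f_convex p s t01.
have -> : t * p + (1 - t) * s = q by rewrite /t; field.
move=> /(ler_wpM2r (ltW sp_gt0)) /le_trans; apply.
by rewrite le_eqVlt; apply/orP; left; apply/eqP; rewrite /t; field.
Qed.

Lemma le_slope_right p q s : p < q -> q <= s -> slope f p q <= slope f p s.
Proof.
move=> pq; rewrite le_eqVlt => /predU1P[<- //|qs].
have := convex_chord pq qs.
have ps : 0 < s - p by rewrite subr_gt0 (lt_trans pq qs).
have qp : 0 < q - p by rewrite subr_gt0.
rewrite (slopeC f p q) (slopeC f p s) /slope ler_pdivrMr // mulrAC ler_pdivlMr //.
nra.
Qed.

Lemma le_slope_left p r s : p <= r -> r < s -> slope f p s <= slope f r s.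
Proof.
rewrite le_eqVlt => /predU1P[<- //|pr] rs.
have := convex_chord pr rs.
have ps : 0 < s - p by rewrite subr_gt0 (lt_trans pr rs).
have sr : 0 < s - r by rewrite subr_gt0.
rewrite (slopeC f p) (slopeC f r) /slope ler_pdivrMr // mulrAC ler_pdivlMr //.
nra.
Qed.

Lemma le_slope a b c d : a != b -> c != d -> a <= c -> b <= d ->
  slope f a b <= slope f c d.
Proof.
have key p q r s : p < q -> r < s -> p <= r -> q <= s -> slope f p q <= slope f r s.
  by move=> pq rs pr qs; apply: le_trans (le_slope_right pq qs) (le_slope_left pr rs).
move=> ab cd ac bd; case: (ltgtP a b) ab => // [ab' | ba'] _;
  case: (ltgtP c d) cd => // [cd' | dc'] _.
- exact: key.
- rewrite (slopeC f c); apply: key => //; first exact: le_trans (ltW ab') bd.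
  exact: le_trans bd (ltW dc').
- rewrite (slopeC f a); apply: key => //; first exact: le_trans (ltW ba') ac.
  exact: le_trans ac (ltW cd').
- by rewrite (slopeC f a) (slopeC f c); apply: key.
Qed.

Hypothesis f_nondecreasing : {homo f : x y / x <= y}.

(* Abel summation, one term at a time: K bounds every slope still to come
   (U and V bound the remaining entries) and p is the partial-sum surplus of
   xs over ys accumulated so far. *)
Lemma weak_majorization_acc (xs ys : seq R) U V K p :
  size xs = size ys -> path >=%R U xs -> path >=%R V ys -> 0 <= K -> 0 <= p ->
  (forall a b, a != b -> a <= U -> b <= V -> slope f a b <= K) ->
  (forall j, 0 <= p + (\sum_(x <- take j xs) x - \sum_(y <- take j ys) y)) ->
  0 <= K * p + (\sum_(x <- xs) f x - \sum_(y <- ys) f y).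
Proof.
elim: xs ys U V K p => [|x xs IH] [|y ys] //= U V K p.
  by move=> _ _ _ K0 p0 _ _; rewrite !big_nil subrr addr0 mulr_ge0.
move=> [sz] /andP[xU pxs] /andP[yV pys] K0 p0 hK hj.
have hj' j : 0 <= (p + (x - y)) + (\sum_(x <- take j xs) x - \sum_(y <- take j ys) y).
  by have := hj j.+1; rewrite /= !big_cons; congr (0 <= _); ring.
have -> : K * p + (\sum_(z <- x :: xs) f z - \sum_(z <- y :: ys) f z)
    = K * p + (f x - f y) + (\sum_(z <- xs) f z - \sum_(z <- ys) f z).
  by rewrite !big_cons; ring.
have hx : 0 <= p + (x - y) by have := hj' 0%N; rewrite !take0 !big_nil subrr addr0.
have [exy|xy] := eqVneq x y.
  have hK' a b : a != b -> a <= x -> b <= y -> slope f a b <= K.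
    by move=> ab ax bx; apply: hK => //; [exact: le_trans xU | exact: le_trans yV].
  have := IH ys x y K _ sz pxs pys K0 hx hK' hj'.
  by rewrite exy !subrr !addr0.
set c := slope f x y.
have cK : c * p <= K * p by rewrite ler_wpM2r // hK.
have fxy : f x - f y = c * (x - y) by rewrite /c /slope mulfVK // subr_eq0.
have := IH ys x y c _ sz pxs pys (slope_ge0 f_nondecreasing x y) hx
  (fun a b ab ax bx => le_slope ab xy ax bx) hj'.
rewrite fxy; lra.
Qed.

Lemma weak_majorization_sum (xs ys : seq R) :
  size xs = size ys -> sorted >=%R xs -> sorted >=%R ys ->
  (forall j, \sum_(y <- take j ys) y <= \sum_(x <- take j xs) x) ->
  \sum_(y <- ys) f y <= \sum_(x <- xs) f x.
Proof.
case: xs ys => [|x xs] [|y ys] //= sz sx sy hj.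
set M := Num.max x y.
have := @weak_majorization_acc (x :: xs) (y :: ys) M M (slope f M (M + 1)) 0 sz.
rewrite mulr0 add0r subr_ge0; apply => //=.
- by rewrite sx andbT le_max lexx.
- by rewrite sy andbT le_max lexx orbT.
- exact: slope_ge0.
- move=> a b ab aM bM; apply: le_slope => //.
    by rewrite eq_sym gt_eqF // ltrDl.
  by rewrite (le_trans bM) // lerDl.
- by move=> j; rewrite add0r subr_ge0.
Qed.

End TomicWeyl.

Section SortDec.
Variables (R : realType) (n : nat) (a : 'I_n -> R).

Lemma size_sort_dec : size (sort_dec a) = n.
Proof. by rewrite size_sort size_map size_enum_ord. Qed.

Lemma mem_sort_dec x : x \in sort_dec a -> exists i, x = a i.
Proof. by rewrite mem_sort => /mapP[i _ ->]; exists i. Qed.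

Lemma sorted_sort_dec : sorted >=%R (sort_dec a).
Proof. by apply: sort_sorted => x y; exact: le_total. Qed.

Lemma big_sort_dec (g : R -> R) : \sum_(i < n) g (a i) = \sum_(x <- sort_dec a) g x.
Proof.
rewrite /sort_dec (perm_big _ (permEl (perm_sort _ _))) big_map big_enum /=.
by apply: eq_bigl => i; rewrite inE.
Qed.

End SortDec.

Section LnMajorization.
Variable R : realType.

Lemma ln_prod (s : seq R) : {in s, forall x, 0 < x} ->
  ln (\prod_(x <- s) x) = \sum_(x <- s) ln x.
Proof.
elim: s => [|x s IH] s0; first by rewrite !big_nil ln1.
have s_gt0 : 0 < \prod_(y <- s) y.
  by rewrite big_seq; apply: prodr_gt0 => y ys; apply: s0; rewrite inE ys orbT.
have x0 : 0 < x by apply: s0; rewrite mem_head.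
rewrite !big_cons lnM ?posrE //.
by rewrite IH // => y ys; apply: s0; rewrite inE ys orbT.
Qed.

Lemma sorted_map_ln (s : seq R) : {in s, forall x, 0 < x} -> sorted >=%R s ->
  sorted >=%R (map (@ln R) s).
Proof.
move=> s0; apply: (homo_sorted_in (P := mem [pred x : R | 0 < x])).
- by move=> x y; rewrite !inE => x0 y0; rewrite /= ler_ln ?posrE.
- by apply/allP => x /s0.
Qed.

Variable n : nat.
Implicit Types a al als : 'I_n -> R.

Lemma sort_dec_gt0 a : (forall i, 0 < a i) -> {in sort_dec a, forall x, 0 < x}.
Proof. by move=> a0 x /mem_sort_dec[i ->]. Qed.

Lemma prod_take_sort_dec_gt0 a j : (forall i, 0 < a i) ->
  0 < \prod_(x <- take j (sort_dec a)) x.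
Proof.
by move=> /sort_dec_gt0 a0; rewrite big_seq; apply: prodr_gt0 => x /mem_take /a0.
Qed.

Lemma sum_take_ln_sort_dec a j : (forall i, 0 < a i) ->
  \sum_(x <- take j (map (@ln R) (sort_dec a))) x
    = ln (\prod_(x <- take j (sort_dec a)) x).
Proof.
move=> /sort_dec_gt0 a0; rewrite -map_take big_map ln_prod //.
by move=> x /mem_take /a0.
Qed.

Lemma prod_majorized_sum_ln al als :
  (forall i, 0 < al i) -> (forall i, 0 < als i) -> prod_majorized als al ->
  forall j, \sum_(x <- take j (map (@ln R) (sort_dec als))) x
              <= \sum_(x <- take j (map (@ln R) (sort_dec al))) x.
Proof.
move=> al0 als0 pm; suff le_n j : (j <= n)%N ->
    \sum_(x <- take j (map (@ln R) (sort_dec als))) x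
      <= \sum_(x <- take j (map (@ln R) (sort_dec al))) x.
  move=> j; have [/le_n //|/ltnW nj] := leqP j n.
  by have := le_n n (leqnn n); rewrite !take_oversize ?size_map ?size_sort_dec.
case: j => [|j] jn; first by rewrite !take0 !big_nil.
rewrite !sum_take_ln_sort_dec // ler_ln ?posrE ?prod_take_sort_dec_gt0 //.
exact: pm.
Qed.

End LnMajorization.

Section LogConvexGenerator.
Variables (R : realType) (phi : R -> R) (u : R).
Hypotheses (phi_gen : nonincreasing_generator phi) (u01 : 0 < u <= 1).

Lemma powR_gt0_le1 a : 0 <= a -> 0 < u `^ a <= 1.
Proof.
have [u0 _] := andP u01; move=> a0.
by rewrite powR_gt0 //= -(powRr0 u) ger_powR.
Qed.

Definition pinv_pow_expR (z : R) : R := fine (gen_pinv phi (u `^ expR z)).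

Lemma pinv_pow_expRP z : [/\ 0 <= pinv_pow_expR z,
  gen_pinv phi (u `^ expR z) = (pinv_pow_expR z)%:E &
  phi (pinv_pow_expR z) = u `^ expR z].
Proof.
have /(generator_onto phi_gen) ex := powR_gt0_le1 (ltW (expR_gt0 z)).
by have [r [r0 E pr]] := gen_pinv_attained phi_gen ex; rewrite /pinv_pow_expR E.
Qed.

Lemma pinv_pow_expR_nondecreasing : {homo pinv_pow_expR : x y / x <= y}.
Proof.
move=> x y xy.
have fin z : gen_pinv phi (u `^ expR z) \is a fin_num.
  by have [_ -> _] := pinv_pow_expRP z.
have /andP[/ltW uy0 _] := powR_gt0_le1 (ltW (expR_gt0 y)).
have /andP[_ ux1] := powR_gt0_le1 (ltW (expR_gt0 x)).
apply: fine_le (fin x) (fin y) (gen_pinv_nonincreasing phi_gen uy0 _ ux1).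
by apply: (ger_powR u01); rewrite ler_expR.
Qed.

(* phi (t x + (1 - t) y) <= (u^(e^a))^t (u^(e^b))^(1-t) = u^(t e^a + (1-t) e^b)
   <= u^(e^(t a + (1-t) b)) by log-convexity of phi and convexity of expR. *)
Lemma pinv_pow_expR_convex : log_convex0 phi -> convex_real pinv_pow_expR.
Proof.
move=> lc a b t /andP[t0 t1]; have t1' : 0 <= 1 - t by rewrite subr_ge0.
set z := t * a + (1 - t) * b; have [_ Ez _] := pinv_pow_expRP z.
have [xa0 _ pxa] := pinv_pow_expRP a; have [xb0 _ pxb] := pinv_pow_expRP b.
rewrite -lee_fin -Ez.
move: (pinv_pow_expR a) (pinv_pow_expR b) xa0 xb0 pxa pxb => xa xb xa0 xb0 pxa pxb.
apply: (gen_pinv_le phi_gen); first exact: addr_ge0 (mulr_ge0 t0 xa0) (mulr_ge0 t1' xb0).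
have /andP[_ ->] := powR_gt0_le1 (ltW (expR_gt0 z)); rewrite andbT.
apply: le_trans (lc _ _ _ xa0 xb0 (introT andP (conj t0 t1))) _.
have u_neq0 : u != 0 by rewrite gt_eqF //; case/andP: u01.
rewrite pxa pxb -!powRrM -powRD; last exact/implyP.
apply: (ger_powR u01); rewrite (mulrC (expR a)) (mulrC (expR b)).
exact: (convex_expR (Itv01 t0 t1) a b).
Qed.

Lemma sum_pinv_pow_sort_dec n (a : 'I_n -> R) : (forall i, 0 < a i) ->
  (\sum_(i < n) gen_pinv phi (u `^ a i)
     = (\sum_(x <- map (@ln R) (sort_dec a)) pinv_pow_expR x)%:E)%E.
Proof.
move=> a0; rewrite big_map -(big_sort_dec a (pinv_pow_expR \o @ln R)) -sumEFin.
apply: eq_bigr => i _; have [_ E _] := pinv_pow_expRP (ln (a i)).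
by rewrite lnK ?posrE in E.
Qed.

Lemma arch_cdf_pow_majorized n (al als : 'I_n -> R) : log_convex0 phi ->
  (forall i, 0 < al i) -> (forall i, 0 < als i) -> prod_majorized als al ->
  arch_cdf phi (fun i => u `^ al i) <= arch_cdf phi (fun i => u `^ als i).
Proof.
move=> lc al0 als0 pm; rewrite /arch_cdf.
apply: gen_ext_nonincreasing => //; first by apply: sume_ge0 => i _; exact: gen_pinv_ge0.
rewrite !sum_pinv_pow_sort_dec // lee_fin.
apply: weak_majorization_sum.
- exact: pinv_pow_expR_convex.
- exact: pinv_pow_expR_nondecreasing.
- by rewrite !size_map !size_sort_dec.
- by apply: sorted_map_ln; [exact: sort_dec_gt0 | exact: sorted_sort_dec].
- by apply: sorted_map_ln; [exact: sort_dec_gt0 | exact: sorted_sort_dec].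
- exact: prod_majorized_sum_ln.
Qed.

End LogConvexGenerator.

Section SuperAdditiveChain.
Variable R : realType.

Lemma super_additive0_sum (h : R -> \bar R) (I : Type) (r : seq I) (a : I -> R) :
  super_additive0 h -> (0 <= h 0%R)%E -> (forall i, 0 <= a i) ->
  (\sum_(i <- r) h (a i) <= h (\sum_(i <- r) a i)%R)%E.
Proof.
move=> sa h0 a0; elim: r => [|i r IH]; first by rewrite !big_nil.
rewrite !big_cons; apply: le_trans (sa _ _ (a0 i) (sumr_ge0 _ (fun j _ => a0 j))).
exact: leeD.
Qed.

Variables (phi1 phi2 : R -> R).
Hypotheses (phi1_gen : nonincreasing_generator phi1)
           (phi2_gen : nonincreasing_generator phi2).

(* If some psi_1(v_i) is infinite then C_1(v) = 0; otherwise v_i = phi_1(a_i)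
   and super-additivity gives sum_i psi_2(v_i) <= psi_2(phi_1(sum_i a_i)). *)
Lemma arch_cdf_le_super_additive n (v : 'I_n -> R) :
  super_additive0 (fun x => gen_pinv phi2 (phi1 x)) -> (forall i, 0 <= v i <= 1) ->
  arch_cdf phi1 v <= arch_cdf phi2 v.
Proof.
move=> sa v01; rewrite /arch_cdf.
have S2 : (0 <= \sum_(i < n) gen_pinv phi2 (v i))%E.
  by apply: sume_ge0 => i _; exact: gen_pinv_ge0.
have [[i hi]|fin] := pselect (exists i, gen_pinv phi1 (v i) = +oo%E).
  rewrite (bigD1 i) //= hi addye /=; first by case/andP: (gen_ext_01 phi2_gen S2).
  by rewrite gt_eqF // (lt_le_trans _ (sume_ge0 _ _)) // => j _; exact: gen_pinv_ge0.
pose a i := fine (gen_pinv phi1 (v i)).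
have Ea i : gen_pinv phi1 (v i) = (a i)%:E.
  rewrite /a fineK // ge0_fin_numE ?gen_pinv_ge0 // ltey.
  by apply/eqP => hi; apply: fin; exists i.
have a0 i : 0 <= a i by rewrite -lee_fin -Ea gen_pinv_ge0.
have pa i : phi1 (a i) = v i by have := gen_ext_pinv phi1_gen (v01 i); rewrite Ea.
have [_ h01 _ _ _] := phi1_gen.
have A01 := h01 _ (sumr_ge0 _ (fun i _ => a0 i) : 0 <= \sum_(i < n) a i).
rewrite (eq_bigr _ (fun i _ => Ea i)) sumEFin /= -{1}(gen_ext_pinv phi2_gen A01).
apply: gen_ext_nonincreasing => //.
under eq_bigr => i _ do rewrite -pa.
by apply: (super_additive0_sum (h := fun x => gen_pinv phi2 (phi1 x))) => //; exact: gen_pinv_ge0.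
Qed.

End SuperAdditiveChain.

Lemma arch_cdf_pow_le (R : realType) n (phi1 phi2 : R -> R) (al als : 'I_n -> R) u :
  nonincreasing_generator phi1 -> nonincreasing_generator phi2 ->
  (forall i, 0 < al i) -> (forall i, 0 < als i) ->
  log_convex0 phi1 \/ log_convex0 phi2 ->
  super_additive0 (fun x => gen_pinv phi2 (phi1 x)) ->
  prod_majorized als al -> 0 <= u <= 1 ->
  arch_cdf phi1 (fun i => u `^ al i) <= arch_cdf phi2 (fun i => u `^ als i).
Proof.
move=> g1 g2 al0 als0 lc sa pm /andP[u0 u1].
have [->|u_neq0] := eqVneq u 0.
  have pow0 (a : 'I_n -> R) : (forall i, 0 < a i) -> (fun i => 0 `^ a i) = fun=> 0.
    by move=> a0; apply/funext => i; rewrite powR0 // gt_eqF.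
  rewrite (pow0 _ al0) (pow0 _ als0).
  by apply: arch_cdf_le_super_additive => // i; rewrite lexx ler01.
have hu : 0 < u <= 1 by rewrite lt_neqAle eq_sym u_neq0 u0 u1.
have v01 (a : 'I_n -> R) : (forall i, 0 < a i) -> forall i, 0 <= u `^ a i <= 1.
  by move=> a0 i; have /andP[/ltW -> ->] := powR_gt0_le1 hu (ltW (a0 i)).
case: lc => lc.
  apply: le_trans _ (arch_cdf_le_super_additive g1 g2 sa (v01 _ als0)).
  exact: arch_cdf_pow_majorized.
apply: le_trans (arch_cdf_le_super_additive g1 g2 sa (v01 _ al0)) _.
exact: arch_cdf_pow_majorized.
Qed.

Lemma abs_cont_df_nonneg_01 (R : realType) (G : R -> R) x :
  abs_cont_df_nonneg G -> 0 <= G x <= 1.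
Proof.
move=> [f [mf f0 int1 _ ->]].
have I0 : (0 <= \int[@lebesgue_measure R]_(y in `]-oo, x]) (f y)%:E)%E.
  by apply: integral_ge0 => y _; rewrite lee_fin.
have I1 : (\int[@lebesgue_measure R]_(y in `]-oo, x]) (f y)%:E <= 1)%E.
  rewrite -int1; apply: ge0_subset_integral => //; last by move=> y _; rewrite lee_fin.
  by apply/measurable_EFinP.
by move: I0 I1; case: (\int[_]_(_ in _) _)%E => [r||] //=; rewrite !lee_fin => -> ->.
Qed.

Lemma vmax_gt_setC (R : realType) (T : Type) n (Y : 'I_n -> T -> R) t :
  [set w | (t%:E < vmax (fun i => Y i w))%E] = ~` [set w | forall i, Y i w <= t].
Proof.
apply/seteqP; split => w /=.
  move=> + hle; apply/negP; rewrite -leNgt.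
  by apply: bigmax_le => [|i _]; rewrite ?leNye // lee_fin.
move=> /existsNP[i /negP]; rewrite -ltNge => lt.
by apply: (lt_le_trans (_ : t%:E < (Y i w)%:E)%E); rewrite ?lte_fin // /vmax (bigD1 i) //= le_max lexx.
Qed.

Lemma measurable_all_le (R : realType) d (T : measurableType d) n
    (X : 'I_n -> {mfun T >-> R}) t :
  measurable [set w | forall i, X i w <= t].
Proof.
rewrite (_ : [set w | _] = \bigcap_(i in setT) (X i @^-1` `]-oo, t])).
  apply: fin_bigcap_measurable; first exact: finite_finset.
  by move=> i _; apply: measurable_funPTI; exact: measurable_itv.
apply/seteqP; split => w /= h i; first by move=> _; rewrite /= in_itv /= h.
by have := h i I; rewrite /= in_itv.
Qed.

Unset Implicit Arguments.

Theorem mainTheorem13 (R : realType) (n : nat) (G : R -> R) (lam : R)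
  (alpha alphas : 'I_n -> R) (phi1 phi2 : R -> R)
  (d1 : measure_display) (T1 : measurableType d1) (P1 : probability T1 R)
  (X : 'I_n -> {RV P1 >-> R})
  (d2 : measure_display) (T2 : measurableType d2) (P2 : probability T2 R)
  (Xs : 'I_n -> {RV P2 >-> R}) :
  (2 <= n)%N ->
  abs_cont_df_nonneg G ->
  0 < lam ->
  (forall i, 0 < alpha i) -> (forall i, 0 < alphas i) ->
  arch_generator n phi1 -> arch_generator n phi2 ->
  (forall x : 'I_n -> R,
     P1 [set w | forall i, X i w <= x i]
     = (arch_cdf phi1 (fun i => G (lam * x i) `^ alpha i))%:E) ->
  (forall x : 'I_n -> R,
     P2 [set w | forall i, Xs i w <= x i]
     = (arch_cdf phi2 (fun i => G (lam * x i) `^ alphas i))%:E) ->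
  log_convex0 phi1 \/ log_convex0 phi2 ->
  super_additive0 (fun x => gen_pinv phi2 (phi1 x)) ->
  prod_majorized alphas alpha ->
  forall t : R,
    (P2 [set w | (t%:E < vmax (fun i => Xs i w))%E]
     <= P1 [set w | (t%:E < vmax (fun i => X i w))%E])%E.
Proof.
move=> n2 hG _ al0 als0 ag1 ag2 cdf1 cdf2 lc sa pm t.
have g1 := arch_generator_nonincreasing n2 ag1.
have g2 := arch_generator_nonincreasing n2 ag2.
rewrite !vmax_gt_setC !probability_setC; [|exact: measurable_all_le..].
rewrite (cdf1 (fun=> t)) (cdf2 (fun=> t)) -!EFinB lee_fin lerD2l lerN2.
exact: arch_cdf_pow_le (abs_cont_df_nonneg_01 _ hG).
Qed.
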